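(* In the setting described in the context, for every $n\ge1$, every $k\ge0$ and every $x\in\mathbb{R}$, \[ \int_{\mathbb{R}}K_n(x,y)\,y^k\,K_n(y,x)\,d\mu(y)=\sum_{\ell=0}^{n-1}\sum_{\ell'=0}^{n-1}q_\ell(x)\,[J^k]_{\ell,\ell'}\,p_{\ell'}(x), \] i.e. the left-hand side equals $\langle\Pi_n\vec q(x),J^k\Pi_n\vec p(x)\rangle_{\ell^2}$, where $\vec p(x)=(p_0(x),p_1(x),\dots)^t$, $\vec q(x)=(q_0(x),q_1(x),\dots)^t$ and $\Pi_n$ replaces all coordinates with index $\ge n$ by $0$.
   Context: Let $r\ge1$ and let $\mu_1,\dots,\mu_r$ be positive Borel measures on $\mathbb{R}$ with all moments finite, forming a perfect system: for every $\vec n\in\mathbb{N}_0^r$ there is a monic polynomial $P_{\vec n}$ of degree $|\vec n|=n_1+\dots+n_r$ with $\int x^kP_{\vec n}\,d\mu_j=0$ for $0\le k\le n_j-1$, $1\le j\le r$. Type I polynomials $A_{\vec n}=(A_{\vec n,1},\dots,A_{\vec n,r})$: $\deg A_{\vec n,j}\le n_j-1$, $\sum_j\int x^kA_{\vec n,j}\,d\mu_j=0$ for $0\le k\le|\vec n|-2$, and $=1$ for $k=|\vec n|-1$. Let $\mu$ be a positive measure with $\mu_j\ll\mu$, $w_j=d\mu_j/d\mu$, $Q_{\vec n}=\sum_jA_{\vec n,j}w_j$. Fix a path $(\vec n_\ell)_{\ell\ge0}$ with $|\vec n_\ell|=\ell$, $\vec n_{\ell+1}=\vec n_\ell+\vec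 e_{i_\ell}$ ($\vec e_j$ the $j$-th unit vector), and set $p_\ell=P_{\vec n_\ell}$, $q_\ell=Q_{\vec n_{\ell+1}}$, so that $\int p_\ell q_{\ell'}\,d\mu=\delta_{\ell,\ell'}$. The Christoffel--Darboux kernel is $K_n(x,y)=\sum_{j=0}^{n-1}p_j(x)q_j(y)$. The matrix $J=[J_{\ell,k}]_{\ell,k\ge0}$ is defined by $xp_\ell=\sum_{k=0}^{\ell+1}J_{\ell,k}p_k$, $J_{\ell,k}=0$ for $k>\ell+1$ (lower Hessenberg, so its powers are well defined). *)

From HB Require Import structures.
From mathcomp Require Import all_boot all_order all_algebra.
From mathcomp Require Import all_classical all_reals all_analysis.
Set Implicit Arguments. Unset Strict Implicit. Unset Printing Implicit Defensive.
Import Order.TTheory GRing.Theory Num.Theory.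
Local Open Scope ring_scope.

Definition mnorm (r : nat) (nv : 'I_r -> nat) : nat := (\sum_(j < r) nv j)%N.

(* The multi-index n_l along the path determined by the directions
   i_0, i_1, ... : n_0 = 0 and n_(l+1) = n_l + e_(i_l). *)
Definition path_idx (r : nat) (i : nat -> 'I_r) (l : nat) : 'I_r -> nat :=
  fun j => (\sum_(m < l) (i m == j))%N.

Definition pseq (R : ringType) (r : nat) (P : ('I_r -> nat) -> {poly R})
  (i : nat -> 'I_r) (l : nat) : {poly R} := P (path_idx i l).

Definition qseq (R : ringType) (r : nat) (A : ('I_r -> nat) -> 'I_r -> {poly R})
  (w : 'I_r -> R -> R) (i : nat -> 'I_r) (l : nat) (y : R) : R :=
  \sum_(j < r) (A (path_idx i l.+1) j).[y] * w j y.

Definition CDkernel (R : comRingType) (r : nat) (P : ('I_r -> nat) -> {poly R})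
  (A : ('I_r -> nat) -> 'I_r -> {poly R}) (w : 'I_r -> R -> R)
  (i : nat -> 'I_r) (n : nat) (x y : R) : R :=
  \sum_(j < n) (pseq P i j).[x] * qseq A w i j y.

(* Powers of a lower Hessenberg infinite matrix J (J l m = 0 for m > l+1):
   [J^0]_{l,l'} = delta, [J^(k+1)]_{l,l'} = sum_{m <= l+1} J_{l,m} [J^k]_{m,l'}
   (the sum is exactly the full matrix product since J is lower Hessenberg). *)
Fixpoint hesspow (R : ringType) (J : nat -> nat -> R) (k l l' : nat) : R :=
  match k with
  | 0 => ((l == l')%:R)
  | k.+1 => \sum_(m < l.+2) J l m * hesspow J k m l'
  end.

From HB Require Import structures.
From mathcomp Require Import all_boot all_order all_algebra.
From mathcomp Require Import all_classical all_reals all_analysis.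
From mathcomp Require Import zify ring measurable_realfun.
Set Implicit Arguments. Unset Strict Implicit. Unset Printing Implicit Defensive.
Import Order.TTheory GRing.Theory Num.Theory.
Local Open Scope ring_scope.
Local Open Scope classical_set_scope.

(** Expanding both kernels, the integrand is
    [sum_(j, l < n) p_j(x) q_l(x) * q_j(y) y^k p_l(y)].  Since [d mu_s = w_s d mu],
    integrating [q_j(y) h(y)] against [mu] is the linear functional
    [h |-> sum_s \int A_(n_(j+1),s) h d mu_s] on polynomials.  Iterating the
    recurrence gives [y^k p_l = sum_m [J^k]_(l,m) p_m], and biorthogonality
    [\int p_m q_j d mu = delta_(j,m)] (type II orthogonality for [m > j], the
    type I normalisation for [m <= j]) leaves exactly [[J^k]_(l,j)]. *)

Section nonneg_density.
Context d (T : measurableType d) (R : realType).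
Variables (mu nu : {measure set T -> \bar R}) (w : T -> R).
Hypothesis mw : measurable_fun setT w.
Hypothesis w_ge0 : forall x, 0 <= w x.
Hypothesis nuE : forall E, measurable E -> (nu E = \int[mu]_(x in E) (w x)%:E)%E.
Local Open Scope ereal_scope.
Import HBNNSimple.

Let mwE : measurable_fun setT (fun x => (w x)%:E). Proof. exact/measurable_EFinP. Qed.

Lemma integral_density_nnsfun (h : {nnsfun T >-> R}) E : measurable E ->
  \int[mu]_(x in E) ((h x)%:E * (w x)%:E) = \int[nu]_(x in E) (h x)%:E.
Proof.
move=> mE; pose S r := h @^-1` [set r].
have hE x : (h x)%:E = \sum_(r \in range h) (r * \1_(S r) x)%:E.
  by rewrite fsumEFin // -fimfunE.
have mindic r : measurable_fun E (fun x => (r * \1_(S r) x)%:E).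
  apply/measurable_EFinP; apply: measurable_funM => //.
  by apply: measurable_indic; exact: measurable_sfunP.
transitivity (\sum_(r \in range h) r%:E * nu (S r `&` E)); last first.
  under [RHS]eq_integral do rewrite hE.
  rewrite ge0_integral_fsum //; last by move=> r x _; exact: nnfun_muleindic_ge0.
  apply: eq_fsbigr => r _.
  by rewrite (integralZl_indic_nnsfun _ mE) (integral_indic _ mE).
under eq_integral => x _.
  rewrite hE ge0_mule_fsuml; last by move=> r; exact: nnfun_muleindic_ge0.
  over.
rewrite ge0_integral_fsum //; first last.
- by move=> r x _; rewrite mule_ge0 ?lee_fin //; exact: nnfun_muleindic_ge0.
- by move=> r; apply: emeasurable_funM => //; exact: measurable_funTS.
apply: eq_fsbigr => r /[!inE] -[x _ <-].
under eq_integral do rewrite EFinM -muleA.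
rewrite ge0_integralZl //; last 2 first.
- by move=> y _; rewrite mule_ge0 ?lee_fin.
- by rewrite lee_fin.
- have mSE : measurable (S (h x) `&` E).
    by apply: measurableI => //; exact: measurable_sfunP.
  rewrite nuE // setIC integral_mkcondr epatch_indic; congr (_ * _).
  by apply: eq_integral => y _; rewrite muleC.
- apply: emeasurable_funM; last exact: measurable_funTS.
  by apply/measurable_EFinP/measurable_indic; exact: measurable_sfunP.
Qed.

Lemma ge0_integral_density (f : T -> \bar R) E : (forall x, 0 <= f x) ->
  measurable E -> measurable_fun E f ->
  \int[mu]_(x in E) (f x * (w x)%:E) = \int[nu]_(x in E) f x.
Proof.
move=> f0 mE mf; pose h := nnsfun_approx mE mf.
have h_cvg x : E x -> (EFin \o h^~ x) @ \oo --> f x.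
  by move=> Ex; exact: cvg_nnsfun_approx.
have mh n : measurable_fun E (EFin \o h n).
  by apply/measurable_EFinP/measurable_funTS.
have h_nd x : {homo (fun n => (h n x)%:E) : m n / (m <= n)%N >-> m <= n}.
  by move=> m n mn; rewrite lee_fin; exact/lefP/nd_nnsfun_approx.
have -> : \int[nu]_(x in E) f x = lim (\int[nu]_(x in E) (h n x)%:E @[n --> \oo]).
  rewrite -monotone_convergence //; last by move=> n x _; rewrite lee_fin.
  by apply: eq_integral => x /[!inE] Ex; apply/esym/cvg_lim => //; exact: h_cvg.
have -> : \int[mu]_(x in E) (f x * (w x)%:E) =
    lim (\int[mu]_(x in E) ((h n x)%:E * (w x)%:E) @[n --> \oo]).
  rewrite -monotone_convergence //; first last.
  - by move=> x _ m n mn; rewrite lee_wpmul2r ?lee_fin //; exact: h_nd.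
  - by move=> n x _; rewrite mule_ge0 ?lee_fin.
  - by move=> n; apply: emeasurable_funM; [exact: mh | exact: measurable_funTS].
  apply: eq_integral => x /[!inE] Ex; apply/esym/cvg_lim => //.
  exact: (cvgeZr _ (h_cvg x Ex)).
by congr (lim (_ @ \oo)); apply/funext => n; exact: integral_density_nnsfun.
Qed.

Let maxe0Mw (e : \bar R) x : maxe (e * (w x)%:E) 0 = maxe e 0 * (w x)%:E.
Proof. by rewrite maxe_pMl ?mul0e ?lee_fin. Qed.

Lemma integral_nneg_density (f : T -> R) : measurable_fun setT f ->
  \int[mu]_x (f x * w x)%:E = \int[nu]_x (f x)%:E.
Proof.
move=> mf; have mfE : measurable_fun setT (EFin \o f) by exact/measurable_EFinP.
rewrite integralE [RHS]integralE; congr (_ - _).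
- rewrite -ge0_integral_density //; last exact: measurable_funepos.
  by apply: eq_integral => x _; rewrite !funeposE EFinM maxe0Mw.
- rewrite -ge0_integral_density //; last exact: measurable_funeneg.
  by apply: eq_integral => x _; rewrite !funenegE EFinM -mulNe maxe0Mw.
Qed.

Lemma integrable_nneg_density (f : T -> R) : measurable_fun setT f ->
  nu.-integrable setT (EFin \o f) -> mu.-integrable setT (fun x => (f x * w x)%:E).
Proof.
move=> mf /integrableP[_ fint]; apply/integrableP; split.
  by apply/measurable_EFinP; exact: measurable_funM.
suff -> : \int[mu]_x `|(f x * w x)%:E| = \int[nu]_x `|(f x)%:E| by [].
rewrite -ge0_integral_density //; last first.
  by apply: measurableT_comp => //; exact/measurable_EFinP.
by apply: eq_integral => x _; rewrite EFinM abseM [`|(w x)%:E|]gee0_abs ?lee_fin.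
Qed.
End nonneg_density.

(* [nu >= 0] forces [w >= 0] [mu]-almost everywhere, so [w] may be replaced by
   [max w 0]. *)
Section signed_density.
Context d (T : measurableType d) (R : realType).
Variables (mu nu : {measure set T -> \bar R}) (w : T -> R).
Hypothesis mw : measurable_fun setT w.
Hypothesis nuE : forall E, measurable E -> (nu E = \int[mu]_(x in E) (w x)%:E)%E.
Local Open Scope ereal_scope.

Let measurable_w_lt0 : measurable [set x | w x < 0]%R.
Proof. by have := mw measurableT (measurable_itv (`]-oo, 0[)%R); rewrite setTI. Qed.

Lemma density_lt0_null : mu [set x | w x < 0]%R = 0.
Proof.
set F := [set x | w x < 0]%R.
have mwF : measurable_fun F (fun x => (- w x)%:E).
  by apply/measurable_EFinP/measurableT_comp => //; exact: measurable_funTS.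
have negw_ge0 x : F x -> 0 <= (- w x)%:E by rewrite lee_fin oppr_ge0 => /ltW.
have negw0 : \int[mu]_(x in F) (- w x)%:E = 0.
  apply/eqP; rewrite eq_le integral_ge0 // andbT -oppe_ge0 -integral_ge0N //.
  by under eq_integral do rewrite EFinN oppeK; rewrite -nuE.
have /(ae_eq_integral_abs mu measurable_w_lt0 mwF) [N [mN N0 FN]] :
    \int[mu]_(x in F) `|(- w x)%:E| = 0.
  by rewrite -negw0; apply: eq_integral => x /set_mem Fx; rewrite gee0_abs ?negw_ge0.
apply/eqP; rewrite -measure_le0 -N0 le_measure ?inE // => x Fx; apply: FN => /=.
by move=> /(_ Fx) /eqP; rewrite eqe oppr_eq0 lt_eqF.
Qed.

Let wp x := Num.max (w x) 0%R.

Let wp_ge0 x : (0 <= wp x)%R. Proof. by rewrite le_max lexx orbT. Qed.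

Let mwp : measurable_fun setT wp.
Proof. by apply: measurable_maxr => //; exact: measurable_cst. Qed.

Lemma ae_eq_density_max0 : ae_eq mu setT w wp.
Proof.
exists [set x | w x < 0]%R; split; [exact: measurable_w_lt0 | exact: density_lt0_null |].
move=> x /= /not_implyP[_]; apply: contra_notP => /negP.
by rewrite -leNgt => w_ge0; rewrite /wp max_l.
Qed.

Lemma density_max0 E : measurable E -> nu E = \int[mu]_(x in E) (wp x)%:E.
Proof.
move=> mE; rewrite nuE //; apply: ae_eq_integral => //.
- by apply/measurable_EFinP; exact: measurable_funTS.
- by apply/measurable_EFinP; exact: measurable_funTS.
- exact/ae_eq_comp/(ae_eq_subset (subsetT E))/ae_eq_density_max0.
Qed.

Let ae_eq_densityM (f : T -> R) :
  ae_eq mu setT (fun x => (f x * w x)%:E) (fun x => (f x * wp x)%:E).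
Proof. exact/(ae_eq_comp EFin)/ae_eq_mul2l/ae_eq_density_max0. Qed.

Lemma integral_density (f : T -> R) : measurable_fun setT f ->
  \int[mu]_x (f x * w x)%:E = \int[nu]_x (f x)%:E.
Proof.
move=> mf; rewrite -(integral_nneg_density mwp wp_ge0 density_max0) //.
by apply: ae_eq_integral => //; apply/measurable_EFinP; exact: measurable_funM.
Qed.

Lemma integrable_density (f : T -> R) : measurable_fun setT f ->
  nu.-integrable setT (EFin \o f) -> mu.-integrable setT (fun x => (f x * w x)%:E).
Proof.
move=> mf /(integrable_nneg_density mwp wp_ge0 density_max0 mf) /integrableP[_].
have mfw g : measurable_fun setT g -> measurable_fun setT (fun x => (f x * g x)%:E).
  by move=> mg; apply/measurable_EFinP; exact: measurable_funM.
move=> fint; apply/integrableP; split; first exact: mfw.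
rewrite (_ : \int[mu]_x _ = \int[mu]_x `|(f x * wp x)%:E|) //.
apply: ae_eq_integral => //; [exact: measurableT_comp (mfw _ _)..|].
exact: ae_eq_abse.
Qed.
End signed_density.

Lemma poly_coef_wide (R : nzSemiRingType) n (p : {poly R}) :
  (size p <= n)%N -> p = \sum_(t < n) p`_t *: 'X^t.
Proof.
move=> sp; rewrite -poly_def; apply/polyP => t; rewrite coef_poly.
by case: ltnP => // nt; rewrite nth_default // (leq_trans sp nt).
Qed.

Section polynomial_integral.
Context (R : realType) (nu : {measure set R -> \bar R}).
Hypothesis moments_fin : forall m, (\int[nu]_y (`|y| ^+ m)%:E < +oo)%E.

Lemma integrable_poly (h : {poly R}) : nu.-integrable setT (fun y => (h.[y])%:E).
Proof.
have monoE m : nu.-integrable setT (fun y => (y ^+ m)%:E).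
  apply/integrableP; split; first by apply/measurable_EFinP; exact: exprn_measurable.
  by under eq_integral do rewrite abse_EFin normrX.
have hE y : \sum_(t < size h) ((h`_t)%:E * (y ^+ t)%:E)%E = (h.[y])%:E.
  by rewrite horner_coef -sumEFin; apply: eq_bigr => t _; rewrite EFinM.
apply: (eq_integrable measurableT _ _ (fun y _ => hE y)).
apply: (integrable_sum measurableT) => t _.
exact: (integrableZl measurableT).
Qed.

Definition poly_integral (h : {poly R}) : R := fine (\int[nu]_y (h.[y])%:E).

Lemma poly_integralE h : (\int[nu]_y (h.[y])%:E = (poly_integral h)%:E)%E.
Proof. by rewrite fineK // (integrable_fin_num measurableT) ?integrable_poly. Qed.

Lemma poly_integralD h1 h2 :
  poly_integral (h1 + h2) = poly_integral h1 + poly_integral h2.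
Proof.
apply: EFin_inj; rewrite EFinD -!poly_integralE.
rewrite -integralD ?integrable_poly //.
by apply: eq_integral => y _; rewrite hornerD EFinD.
Qed.

Lemma poly_integralZ c h : poly_integral (c *: h) = c * poly_integral h.
Proof.
apply: EFin_inj; rewrite EFinM -!poly_integralE -integralZl ?integrable_poly //.
by apply: eq_integral => y _; rewrite hornerZ EFinM.
Qed.

Lemma poly_integral0 : poly_integral 0 = 0.
Proof. by rewrite -(scale0r 0) poly_integralZ mul0r. Qed.

Lemma poly_integral_sum I (s : seq I) (Q : pred I) (F : I -> {poly R}) :
  poly_integral (\sum_(k <- s | Q k) F k) = \sum_(k <- s | Q k) poly_integral (F k).
Proof. exact: (big_morph _ poly_integralD poly_integral0). Qed.
End polynomial_integral.

Lemma path_idx_mono r (i : nat -> 'I_r) (s : 'I_r) :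
  {homo path_idx i ^~ s : l m / (l <= m)%N}.
Proof.
move=> l m lm.
rewrite /path_idx -!(big_mkord xpredT (fun t => nat_of_bool (i t == s))).
by rewrite [X in (_ <= X)%N](big_cat_nat _ lm) //= leq_addr.
Qed.

Lemma mnorm_path_idx r (i : nat -> 'I_r) l : mnorm (path_idx i l) = l.
Proof.
rewrite /mnorm /path_idx exchange_big /= -[RHS]card_ord -sum1_card.
apply: eq_bigr => m _; rewrite (bigD1 (i m)) //= eqxx big1 // => s.
by rewrite eq_sym => /negbTE ->.
Qed.

Lemma Xpow_hesspow (R : comRingType) (J : nat -> nat -> R) (p : nat -> {poly R}) :
  (forall l, 'X * p l = \sum_(m < l.+2) J l m *: p m) ->
  forall k l N, (l + k < N)%N -> 'X^k * p l = \sum_(m < N) hesspow J k l m *: p m.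
Proof.
move=> Xp; elim=> [|k IHk] l N lkN /=.
  rewrite addn0 in lkN; rewrite expr0 mul1r (bigD1 (Ordinal lkN)) //= eqxx scale1r.
  rewrite big1 ?addr0 // => m /eqP ml.
  rewrite (_ : (l == m) = false) ?scale0r //.
  by apply/eqP => lm; apply: ml; exact: val_inj.
rewrite exprSr -mulrA Xp mulr_sumr.
transitivity (\sum_(m < l.+2) \sum_(t < N) (J l m * hesspow J k m t) *: p t).
  apply: eq_bigr => m _; rewrite -mul_polyC mulrCA mul_polyC (IHk m N).
    by rewrite scaler_sumr; apply: eq_bigr => t _; rewrite scalerA.
  by move: (ltn_ord m) lkN; rewrite addnS; lia.
by rewrite exchange_big /=; apply: eq_bigr => t _; rewrite scaler_suml.
Qed.

Lemma CDkernel_productE (R : comRingType) r (P : ('I_r -> nat) -> {poly R})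
    (A : ('I_r -> nat) -> 'I_r -> {poly R}) (w : 'I_r -> R -> R) i n k x y :
  CDkernel P A w i n x y * y ^+ k * CDkernel P A w i n y x =
  \sum_(s < r) (\sum_(j < n) \sum_(l < n) ((pseq P i j).[x] * qseq A w i l x) *:
                 (A (path_idx i j.+1) s * ('X^k * pseq P i l))).[y] * w s y.
Proof.
under eq_bigr do rewrite horner_sum mulr_suml; rewrite exchange_big /=.
rewrite /CDkernel mulr_suml mulr_suml; apply: eq_bigr => j _.
under eq_bigr do rewrite horner_sum mulr_suml; rewrite exchange_big /=.
rewrite mulr_sumr; apply: eq_bigr => l _.
rewrite /qseq mulr_sumr !mulr_suml; apply: eq_bigr => s _.
by rewrite hornerZ !hornerM hornerXn; ring.
Qed.

Section multiple_orthogonality.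
Context (R : realType) (r : nat) (mu_ : 'I_r -> {measure set R -> \bar R}).
Variables (P : ('I_r -> nat) -> {poly R}) (A : ('I_r -> nat) -> 'I_r -> {poly R}).
Hypothesis moments_fin : forall s m, (\int[mu_ s]_y (`|y| ^+ m)%:E < +oo)%E.
Hypothesis P_orth : forall nv s m, (m < nv s)%N ->
  (\int[mu_ s]_y (y ^+ m * (P nv).[y])%:E = 0)%E.
Hypothesis A_normal : forall nv m, (m < mnorm nv)%N ->
  (\sum_(s < r) \int[mu_ s]_y (y ^+ m * (A nv s).[y])%:E)%E
    = ((m.+1 == mnorm nv)%:R)%:E.

Local Notation L s := (poly_integral (mu_ s)).

Let L_Xn s m (h : {poly R}) :
  (\int[mu_ s]_y (y ^+ m * h.[y])%:E)%E = (L s ('X^m * h))%:E.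
Proof.
rewrite -(poly_integralE (moments_fin s)).
by apply: eq_integral => y _; rewrite hornerM hornerXn.
Qed.

Lemma typeII_orthogonality nv s (h : {poly R}) :
  (size h <= nv s)%N -> L s (h * P nv) = 0.
Proof.
move=> sh; rewrite (poly_coef_wide sh) mulr_suml (poly_integral_sum (moments_fin s)).
apply: big1 => t _; rewrite -scalerAl (poly_integralZ (moments_fin s)).
suff -> : L s ('X^t * P nv) = 0 by rewrite mulr0.
by apply: EFin_inj; rewrite -L_Xn P_orth // (leq_trans (ltn_ord t)).
Qed.

Lemma typeI_normalization nv (h : {poly R}) : (size h <= mnorm nv)%N ->
  \sum_(s < r) L s (h * A nv s) = h`_(mnorm nv).-1.
Proof.
move=> sh; rewrite {1}(poly_coef_wide sh).
transitivity (\sum_(t < mnorm nv) h`_t * \sum_(s < r) L s ('X^t * A nv s)).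
  under [RHS]eq_bigr do rewrite mulr_sumr.
  rewrite [RHS]exchange_big /=; apply: eq_bigr => s _.
  rewrite mulr_suml (poly_integral_sum (moments_fin s)); apply: eq_bigr => t _.
  by rewrite -scalerAl (poly_integralZ (moments_fin s)).
have L_A (t : 'I_(mnorm nv)) :
    \sum_(s < r) L s ('X^t * A nv s) = (t.+1 == mnorm nv)%:R.
  apply: EFin_inj; rewrite -sumEFin -A_normal //.
  by apply: eq_bigr => s _; rewrite L_Xn.
under eq_bigr do rewrite L_A.
move: sh; case: (mnorm nv) => [|n] sh; first by rewrite big_ord0 nth_default.
rewrite big_ord_recr /= eqxx mulr1 big1 ?add0r // => t _.
by rewrite eqSS ltn_eqF ?mulr0.
Qed.

Variable i : nat -> 'I_r.
Hypothesis P_monic : forall nv, P nv \is monic.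
Hypothesis P_size : forall nv, size (P nv) = (mnorm nv).+1.
Hypothesis A_size : forall nv s, (size (A nv s) <= nv s)%N.

Lemma biorthogonality j m :
  \sum_(s < r) L s (A (path_idx i j.+1) s * pseq P i m) = (j == m)%:R.
Proof.
have [jm|mj] := ltnP j m.
  rewrite (ltn_eqF jm) big1 // => s _; rewrite /pseq typeII_orthogonality //.
  exact: leq_trans (A_size _ s) (path_idx_mono i s jm).
have size_p : size (pseq P i m) = m.+1 by rewrite P_size mnorm_path_idx.
under eq_bigr do rewrite mulrC.
rewrite typeI_normalization mnorm_path_idx ?size_p //=.
move: mj; rewrite leq_eqVlt => /predU1P[mj|mj].
  subst m; rewrite eqxx; have /monicP := P_monic (path_idx i j).
  by rewrite /lead_coef -/(pseq P i j) size_p.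
by rewrite gtn_eqF // nth_default // size_p.
Qed.

Variable J : nat -> nat -> R.
Hypothesis J_rec : forall l, 'X * pseq P i l = \sum_(m < l.+2) J l m *: pseq P i m.

Lemma biorthogonality_Xpow j k l :
  \sum_(s < r) L s (A (path_idx i j.+1) s * ('X^k * pseq P i l)) = hesspow J k l j.
Proof.
have jN : (j < (l + k + j).+1)%N by rewrite ltnS leq_addl.
rewrite (Xpow_hesspow J_rec (N := (l + k + j).+1)) ?ltnS ?leq_addr //.
transitivity (\sum_(m < (l + k + j).+1) hesspow J k l m * (j == m)%:R).
  under [RHS]eq_bigr do rewrite -biorthogonality mulr_sumr.
  rewrite [RHS]exchange_big /=; apply: eq_bigr => s _.
  rewrite mulr_sumr (poly_integral_sum (moments_fin s)); apply: eq_bigr => m _.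
  by rewrite -scalerAr (poly_integralZ (moments_fin s)).
rewrite (bigD1 (Ordinal jN)) //= eqxx mulr1 big1 ?addr0 // => m mj.
by rewrite eq_sym (negbTE (mj : (m : nat) != j)) mulr0.
Qed.

Variables (mu : {measure set R -> \bar R}) (w : 'I_r -> R -> R).
Hypothesis mw : forall s, measurable_fun setT (w s).
Hypothesis mu_E : forall s E, measurable E ->
  (mu_ s E = \int[mu]_(y in E) (w s y)%:E)%E.

Lemma integrable_poly_weight s (h : {poly R}) :
  mu.-integrable setT (fun y => (h.[y] * w s y)%:E).
Proof.
exact: (integrable_density (mw s) (mu_E s) (@measurable_poly _ h setT))
  (integrable_poly (moments_fin s) h).
Qed.

Lemma integral_poly_weight s (h : {poly R}) :
  (\int[mu]_y (h.[y] * w s y)%:E = (L s h)%:E)%E.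
Proof.
by rewrite (integral_density (mw s) (mu_E s) (@measurable_poly _ h setT)) poly_integralE.
Qed.

Lemma integral_CDkernel_moment n k x :
  (\int[mu]_y (CDkernel P A w i n x y * y ^+ k * CDkernel P A w i n y x)%:E
  = (\sum_(l < n) \sum_(l' < n)
        qseq A w i l x * hesspow J k l l' * (pseq P i l').[x])%R%:E)%E.
Proof.
under eq_integral do rewrite CDkernel_productE -sumEFin.
rewrite integral_sum //; last by move=> s; exact: integrable_poly_weight.
rewrite (eq_bigr _ (fun s _ => integral_poly_weight s _)) sumEFin; congr EFin.
have L_lin s (c : 'I_n -> 'I_n -> R) (F : 'I_n -> 'I_n -> {poly R}) :
    L s (\sum_(j < n) \sum_(l < n) c j l *: F j l) =
    \sum_(j < n) \sum_(l < n) c j l * L s (F j l).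
  rewrite (poly_integral_sum (moments_fin s)); apply: eq_bigr => j _.
  rewrite (poly_integral_sum (moments_fin s)); apply: eq_bigr => l _.
  exact: poly_integralZ.
under eq_bigr do rewrite L_lin.
rewrite exchange_big /= [RHS]exchange_big; apply: eq_bigr => l' _.
rewrite exchange_big; apply: eq_bigr => l _.
by rewrite -mulr_sumr biorthogonality_Xpow; ring.
Qed.
End multiple_orthogonality.

Local Close Scope classical_set_scope.

Theorem lemma1 (R : realType) (r : nat)
  (mu_ : 'I_r -> {measure set R -> \bar R})
  (mu : {measure set R -> \bar R})
  (w : 'I_r -> R -> R)
  (P : ('I_r -> nat) -> {poly R})
  (A : ('I_r -> nat) -> 'I_r -> {poly R})
  (i : nat -> 'I_r)
  (J : nat -> nat -> R)
  (n k : nat) (x : R) :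
  (0 < r)%N ->
  (* all moments of each mu_j are finite *)
  (forall (j : 'I_r) (m : nat), (\int[mu_ j]_y (`|y| ^+ m)%:E < +oo)%E) ->
  (* type II polynomials (perfect system): P_n monic of degree |n| *)
  (forall nv : 'I_r -> nat,
      P nv \is monic /\ size (P nv) = (mnorm nv).+1 /\
      (forall (j : 'I_r) (m : nat), (m < nv j)%N ->
          (\int[mu_ j]_y (y ^+ m * (P nv).[y])%:E = 0)%E)) ->
  (* type I polynomials *)
  (forall nv : 'I_r -> nat,
      (forall j : 'I_r, (size (A nv j) <= nv j)%N) /\
      (forall m : nat, (m < mnorm nv)%N ->
          (\sum_(j < r) \int[mu_ j]_y (y ^+ m * (A nv j).[y])%:E)%E
            = (((m.+1 == mnorm nv)%:R : R)%:E))) ->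
  (* mu_j << mu with Radon-Nikodym derivative w_j = d mu_j / d mu *)
  (forall j : 'I_r, measurable_fun setT (w j)) ->
  (forall (j : 'I_r) (E : set R), measurable E ->
      (mu_ j E = \int[mu]_(y in E) (w j y)%:E)%E) ->
  (* J is the (lower Hessenberg) recurrence matrix: x p_l = sum_{m<=l+1} J_{l,m} p_m *)
  (forall l : nat, 'X * pseq P i l = \sum_(m < l.+2) J l m *: pseq P i m) ->
  (forall l m : nat, (l.+1 < m)%N -> J l m = 0) ->
  (0 < n)%N ->
  (\int[mu]_y (CDkernel P A w i n x y * y ^+ k * CDkernel P A w i n y x)%:E
  = (\sum_(l < n) \sum_(l' < n)
        qseq A w i l x * hesspow J k l l' * (pseq P i l').[x])%R%:E)%E.
Proof.
move=> _ moments_fin typeII typeI mw mu_E J_rec _ _.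
have P_monic nv := (typeII nv).1.
have P_size nv := (typeII nv).2.1.
have P_orth nv := (typeII nv).2.2.
have A_size nv := (typeI nv).1.
have A_normal nv := (typeI nv).2.
exact: integral_CDkernel_moment.
Qed.
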